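(* Let $d,s\ge1$ be integers and let $f$ be a real-valued trigonometric polynomial on $[0,1]^d$ with $\hat f(\omega)=0$ whenever $\|\omega\|_\infty>2s$, with minimal value $f_\ast$. Suppose $g=\sum_{j=1}^N|q_j|^2$ for finitely many trigonometric polynomials $q_j$ of degree at most $s$, and $\|f-f_\ast-g\|_{\rm F}\le\varepsilon'$. Then \[ 0\le f_\ast-c_\ast(f,s)\le(2s+1)^d\varepsilon'. \]
   Context: Fourier coefficients $\hat f(\omega)=\int_{[0,1]^d}f(x)e^{-2i\pi\omega^\top x}dx$; F-norm $\|h\|_{\rm F}=\sum_{\omega\in\mathbb Z^d}|\hat h(\omega)|$. A trigonometric polynomial of degree at most $s$ is $q(x)=\sum_{\omega\in\mathbb Z^d,\|\omega\|_\infty\le s}a_\omega e^{2i\pi\omega^\top x}$ with $a_\omega\in\mathbb C$. $c_\ast(f,s)$ is the supremum of $c\in\mathbb R$ such that $f-c=\sum_{j}|q_j|^2$ for finitely many trigonometric polynomials $q_j$ of degree at most $s$. *)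

From Stdlib Require Import Rdefinitions Rtrigo_def Rtrigo1.
From mathcomp Require Import all_boot all_order all_algebra.
From mathcomp Require Import complex.
From mathcomp Require Import boolp classical_sets reals Rstruct.

Set Implicit Arguments.
Unset Strict Implicit.
Unset Printing Implicit Defensive.

Import Order.TTheory GRing.Theory Num.Theory.
Local Open Scope ring_scope.

Definition RR : realType := Rdefinitions.R.
Definition CC := complex RR.

Definition pt (d : nat) := 'I_d -> RR.

Definition cube (d : nat) (x : pt d) : Prop := forall i, 0 <= x i <= 1.

(* frequency index set {omega in Z^d : ||omega||_oo <= s}, encoded by
   k : 'I_d -> 'I_(2s+1) via omega_i = k_i - s *)
Definition freq (d s : nat) := {ffun 'I_d -> 'I_(s.*2.+1)}.
Definition omega_of (d s : nat) (k : freq d s) : 'I_d -> int :=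
  fun i => (nat_of_ord (k i))%:Z - s%:Z.

Definition ephase (d : nat) (w : 'I_d -> int) (x : pt d) : CC :=
  let t : RR := 2 * Rtrigo1.PI * \sum_(i < d) (w i)%:~R * x i in
  (Rtrigo_def.cos t +i* Rtrigo_def.sin t)%C.

Definition trig_sum (d s : nat) (a : freq d s -> CC) (x : pt d) : CC :=
  \sum_(k : freq d s) a k * ephase (omega_of k) x.

Definition is_trigpoly (d s : nat) (q : pt d -> CC) : Prop :=
  exists a : freq d s -> CC, forall x, q x = trig_sum a x.

Definition is_sos (d s : nat) (h : pt d -> RR) : Prop :=
  exists (N : nat) (q : 'I_N -> pt d -> CC),
    (forall j, is_trigpoly s (q j)) /\
    (forall x, cube x -> (h x)%:C%C = \sum_(j < N) `|q j x| ^+ 2).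

(* ||h||_F <= eps : the Fourier coefficients of the trigonometric polynomial h
   (on [0,1]^d) are its coefficients a_omega, and ||h||_F = sum_omega |a_omega|. *)
Definition Fnorm_le (d : nat) (h : pt d -> RR) (eps : RR) : Prop :=
  exists (n : nat) (a : freq d n -> CC),
    (forall x, cube x -> (h x)%:C%C = trig_sum a x) /\
    \sum_(k : freq d n) `|a k| <= eps%:C%C.

Definition c_star (d s : nat) (f : pt d -> RR) : RR :=
  sup [set c : RR | is_sos s (fun x => f x - c)]%classic.

From Stdlib Require Import Rdefinitions Rtrigo_def Rtrigo1.
From mathcomp Require Import all_boot all_order all_algebra.
From mathcomp Require Import complex.
From mathcomp Require Import classical_sets reals Rstruct.
From mathcomp Require Import ring lra zify.
Set Implicit Arguments.
Unset Strict Implicit.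
Unset Printing Implicit Defensive.

Import Order.TTheory GRing.Theory Num.Theory.
Local Open Scope ring_scope.

(* Let h = f - f_* - g, a real function given on the cube as a trigonometric
   polynomial sum_k a_k e^{2 i pi omega_k^T x} with sum_k |a_k| <= eps.
   1. Uniqueness of coefficients: an exponential sum vanishing on [0,1]^d has,
      for every frequency, coefficients adding up to zero.  In one variable this
      is a polynomial with infinitely many roots on the unit circle; d variables
      reduce to one by the Kronecker substitution x_k = t (2B+1)^k.
   2. Since f has degree 2s and g is a sum of squares of degree-s polynomials,
      h has spectrum in ||omega||_oo <= 2s, so by 1. a_k = 0 outside that box.
   3. Each term |a| + Re(a e^{2 i pi omega^T x}) with ||omega||_oo <= 2s is a
      square |u e_+ + w e_-|^2 of a degree-s polynomial (omega = omega_+ - omega_-),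
      hence h + sum_k |a_k| and f - (f_* - sum_k |a_k|) = g + h + sum_k |a_k|
      are sums of squares.
   4. Therefore f_* - eps <= c_*(f,s) <= f_*, the upper bound because a sum of
      squares is nonnegative at a minimiser of f; the stated bound follows
      since (2s+1)^d >= 1. *)

Definition cis2pi (y : RR) : CC :=
  let t : RR := 2 * Rtrigo1.PI * y in
  (Rtrigo_def.cos t +i* Rtrigo_def.sin t)%C.

Lemma ephaseE d (w : 'I_d -> int) x :
  ephase w x = cis2pi (\sum_(i < d) (w i)%:~R * x i).
Proof. by []. Qed.

Lemma cis2piD a b : cis2pi (a + b) = cis2pi a * cis2pi b.
Proof.
rewrite /cis2pi mulrDr.
rewrite (cos_plus (2 * PI * a : RR)) (sin_plus (2 * PI * a : RR)).
rewrite -[(_ +i* _)%C * (_ +i* _)%C]/(_ +i* _)%C.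
by congr (_ +i* _)%C; rewrite addrC.
Qed.

Lemma cis2pi0 : cis2pi 0 = 1.
Proof. by rewrite /cis2pi mulr0 cos_0 sin_0. Qed.

Lemma cis2piN a : cis2pi (- a) = (cis2pi a)^*%C.
Proof. by rewrite /cis2pi mulrN -RoppE cos_neg sin_neg. Qed.

Lemma cis2pi_unit a : cis2pi a * (cis2pi a)^*%C = 1.
Proof. by rewrite -cis2piN -cis2piD subrr cis2pi0. Qed.

Lemma cis2piMn (k : nat) a : cis2pi (k%:R * a) = cis2pi a ^+ k.
Proof.
elim: k => [|k IH]; first by rewrite mul0r cis2pi0 expr0.
by rewrite -addn1 natrD mulrDl mul1r cis2piD IH exprD expr1.
Qed.

(* cis2pi is injective on [0, 1/2], since the cosine is decreasing on [0, pi]. *)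
Lemma cis2pi_inj u v : 0 <= u <= 2^-1 -> 0 <= v <= 2^-1 ->
  cis2pi u = cis2pi v -> u = v.
Proof.
have PI0 : (0 : RR) < PI by apply/RltP; exact: PI_RGT_0.
have angle w : 0 <= w <= 2^-1 -> 0 <= 2 * PI * w /\ 2 * PI * w <= PI.
  move=> /andP[w0 w1]; have w1' : 2 * w <= 1 by lra.
  split; first by rewrite mulr_ge0 // mulr_ge0 // ltW.
  by rewrite mulrAC ler_piMl // ltW.
suff cis_lt a b : 0 <= a <= 2^-1 -> 0 <= b <= 2^-1 -> a < b -> cis2pi a != cis2pi b.
  move=> hu hv euv; case: (ltgtP u v) => // [uv|vu].
  - by move: (cis_lt _ _ hu hv uv); rewrite euv eqxx.
  - by move: (cis_lt _ _ hv hu vu); rewrite euv eqxx.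
move=> /angle[/RleP a0 /RleP a1] /angle[/RleP b0 /RleP b1] ab; apply/eqP => -[/= cos_ab _].
have /RltP ab' : 2 * PI * a < 2 * PI * b by rewrite ltr_pM2l // mulr_gt0.
by move: (cos_decreasing_1 _ _ a0 a1 b0 b1 ab') => /RltP; rewrite cos_ab ltxx.
Qed.

(* A polynomial vanishing at cis2pi t for every t in a nontrivial interval
   [0, h] is zero: these are infinitely many distinct points of the circle. *)
Lemma poly_cis2pi_eq0 (P : {poly CC}) (h : RR) : 0 < h ->
  (forall t, 0 <= t <= h -> P.[cis2pi t] = 0) -> P = 0.
Proof.
move=> h0 HP; apply/eqP; apply: contraT => P_neq0.
pose M := size P; pose m := Num.min h 2^-1.
have m0 : 0 < m by rewrite lt_min h0 invr_gt0 ltr0n.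
pose step := m / M.+1%:R.
have step0 : 0 < step by rewrite divr_gt0 // ltr0n.
have node_in k : (k < M)%N -> 0 <= k%:R * step <= m.
  move=> kM; apply/andP; split; first by rewrite mulr_ge0 ?ler0n ?ltW.
  apply: (@le_trans _ RR (M.+1%:R * step)); first by rewrite ler_pM2r // ler_nat; lia.
  by rewrite mulrC divfK // pnatr_eq0.
pose rs := [seq cis2pi (k%:R * step) | k <- iota 0 M].
have roots : all (root P) rs.
  apply/allP => z /mapP [k]; rewrite mem_iota add0n => /andP[_ kM] ->.
  have /andP[k0 km] := node_in k kM.
  by apply/rootP; rewrite HP // k0 (le_trans km) // ge_min lexx.
have rs_uniq : uniq rs.
  rewrite map_inj_in_uniq ?iota_uniq // => k1 k2.
  rewrite !mem_iota !add0n => /andP[_ k1M] /andP[_ k2M] /cis2pi_inj.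
  have m_half : m <= 2^-1 by rewrite ge_min lexx orbT.
  have /andP[a0 a1] := node_in k1 k1M; have /andP[b0 b1] := node_in k2 k2M.
  rewrite a0 b0 (le_trans a1 m_half) (le_trans b1 m_half) => /(_ isT isT) /eqP.
  by rewrite (inj_eq (mulIf (lt0r_neq0 step0))) eqr_nat => /eqP.
by have := max_poly_roots P_neq0 roots rs_uniq; rewrite size_map size_iota ltnn.
Qed.

(* Shifting all frequencies to be
   nonnegative turns the sum into a polynomial evaluated at cis2pi t. *)
Lemma cis2pi_sum_coef_eq0 (I : finType) (L : I -> int) (c : I -> CC) (h : RR) :
  0 < h -> (forall t, 0 <= t <= h -> \sum_i c i * cis2pi ((L i)%:~R * t) = 0) ->
  forall j, \sum_(i | L i == L j) c i = 0.
Proof.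
move=> h0 H j.
pose N : nat := \max_i `|L i|%N.
pose K i : nat := absz (L i + N%:Z).
have KE i : (K i)%:Z = L i + N%:Z.
  by apply: gez0_abs; have := @leq_bigmax _ (fun i => `|L i|%N) i; lia.
have KR i : (K i)%:R = (L i)%:~R + N%:R :> RR.
  by rewrite -[(K i)%:R]/(((K i)%:Z)%:~R) KE intrD.
pose P : {poly CC} := \sum_i c i *: 'X^(K i).
have P0 : P = 0.
  apply: (@poly_cis2pi_eq0 P h h0) => t ht; rewrite horner_sum.
  under eq_bigr do rewrite hornerZ hornerXn -cis2piMn KR mulrDl cis2piD mulrA.
  by rewrite -mulr_suml H // mul0r.
have := congr1 (fun p : {poly CC} => p`_(K j)) P0; rewrite /= coef_sumMXn coef0.
move=> coefK; apply: etrans coefK; apply: eq_bigl => i /=.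
by rewrite -eqz_nat !KE (inj_eq (addIr _)).
Qed.

Lemma base_digits_eq0 (M d : nat) (delta : 'I_d -> int) :
  (forall k, (absz (delta k) < M)%N) ->
  \sum_k delta k * (M ^ (k : nat))%:Z = 0 -> forall k, delta k = 0.
Proof.
elim: d delta => [|d IH] delta small; first by move=> _ [].
rewrite big_ord_recl /= expn0 mulr1.
set T := \sum_(i < d) delta (lift ord0 i) * (M ^ (i : nat))%:Z.
have -> : \sum_(i < d) delta (lift ord0 i) * (M ^ (bump 0 i))%:Z = M%:Z * T.
  rewrite mulr_sumr; apply: eq_bigr => i _.
  by rewrite /bump /= add1n expnS PoszM mulrCA.
move=> sum0.
have T0 : T = 0.
  have delta0 : delta ord0 = - (M%:Z * T) by apply/eqP; rewrite -addr_eq0 sum0.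
  have := small ord0; rewrite delta0 => small0.
  by apply/eqP; apply: contraT => T_neq0; move: small0; nia.
have delta0 : delta ord0 = 0 by move: sum0; rewrite T0 mulr0 addr0.
have := IH (fun i => delta (lift ord0 i)) (fun i => small _) T0.
by move=> high k; case: (unliftP ord0 k) => [k' ->|->].
Qed.

(* Along the
   segment x_k = t (2B+1)^k the sum becomes a one-variable exponential sum whose
   frequencies are the base-(2B+1) encodings of the m_i (Kronecker substitution). *)
Lemma ephase_sum_coef_eq0 d (I : finType) (m : I -> 'I_d -> int) (c : I -> CC)
  (B : nat) : (forall i k, (absz (m i k) <= B)%N) ->
  (forall x, cube x -> \sum_i c i * ephase (m i) x = 0) ->
  forall j, \sum_(i | [forall k, m i k == m j k]) c i = 0.
Proof.
move=> hB H j.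
pose M := B.*2.+1.
pose L i : int := \sum_k m i k * (M ^ (k : nat))%:Z.
pose h : RR := ((M ^ d)%:R)^-1.
have Md0 : (0 < M ^ d)%N by rewrite expn_gt0.
have h0 : 0 < h by rewrite invr_gt0 ltr0n.
have on_segment t : 0 <= t <= h -> \sum_i c i * cis2pi ((L i)%:~R * t) = 0.
  move=> /andP[t0 th].
  pose x : pt d := fun k => t * (M ^ (k : nat))%:R.
  have x_cube : cube x.
    move=> k; rewrite /x mulr_ge0 ?ler0n //=.
    apply: (le_trans (y := h * (M ^ d)%:R)); last by rewrite mulVf // pnatr_eq0 -lt0n.
    by apply: ler_pM => //; rewrite ler_nat leq_pexp2l // ltnW.
  apply: etrans (H x x_cube); apply: eq_bigr => i _; rewrite ephaseE; congr (_ * cis2pi _).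
  rewrite /L rmorph_sum mulr_suml; apply: eq_bigr => k _.
  by rewrite /x rmorphM /= mulrAC mulrA.
move: (@cis2pi_sum_coef_eq0 I L c h h0 on_segment j); apply: etrans; apply: eq_bigl => i /=.
apply/forallP/eqP => [same|sameL].
  by apply: eq_bigr => k _; rewrite (eqP (same k)).
move=> k; rewrite -subr_eq0; apply/eqP; move: k.
apply: (@base_digits_eq0 M) => [k|].
  by have := hB i k; have := hB j k; rewrite /M; lia.
by under eq_bigr do rewrite mulrBl; rewrite sumrB -/(L i) -/(L j) sameL subrr.
Qed.

Lemma ephase_sub d (w1 w2 w : 'I_d -> int) x : (forall i, w i = w1 i - w2 i) ->
  ephase w1 x * (ephase w2 x)^*%C = ephase w x.
Proof.
move=> hw; rewrite !ephaseE -cis2piN -cis2piD; congr cis2pi.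
rewrite -sumrN -big_split; apply: eq_bigr => i _ /=.
by rewrite hw intrB mulrBl.
Qed.

Lemma ephase_unit d (w : 'I_d -> int) x : ephase w x * (ephase w x)^*%C = 1.
Proof. by rewrite ephaseE cis2pi_unit. Qed.

Lemma ephase0 d x : ephase (fun _ : 'I_d => 0) x = 1.
Proof. by rewrite ephaseE big1 ?cis2pi0 // => i _; rewrite mul0r. Qed.

Lemma omega_bound d n (k : freq d n) i : (absz (omega_of k i) <= n)%N.
Proof. by rewrite /omega_of; have := ltn_ord (k i); lia. Qed.

Lemma omega_inj d n (k k' : freq d n) :
  (forall i, omega_of k' i = omega_of k i) -> k' = k.
Proof.
move=> same; apply/ffunP => i; apply: val_inj => /=.
by have := same i; rewrite /omega_of; lia.
Qed.

Definition spectrum_le d (B : nat) (h : pt d -> CC) : Prop :=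
  exists (I : finType) (c : I -> CC) (m : I -> 'I_d -> int),
    (forall i k, (absz (m i k) <= B)%N) /\
    (forall x, cube x -> h x = \sum_i c i * ephase (m i) x).

Lemma spectrum_trigpoly d B (q : pt d -> CC) : is_trigpoly B q -> spectrum_le B q.
Proof. by case=> a ha; exists (freq d B), a, (@omega_of d B); split; [exact: omega_bound|]. Qed.

Lemma spectrum_const d B (c : CC) : spectrum_le B (fun _ : pt d => c).
Proof.
exists 'I_1, (fun _ => c), (fun _ _ => 0); split=> [//|x _].
by rewrite big_ord1 ephase0 mulr1.
Qed.

Lemma spectrum_ext d B (h h' : pt d -> CC) :
  (forall x, cube x -> h x = h' x) -> spectrum_le B h' -> spectrum_le B h.
Proof.
move=> hh' [I [c [m [bm em]]]]; exists I, c, m; split=> // x x_cube.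
by rewrite hh' // em.
Qed.

Lemma spectrum_add d B (h1 h2 : pt d -> CC) :
  spectrum_le B h1 -> spectrum_le B h2 -> spectrum_le B (fun x => h1 x + h2 x).
Proof.
move=> [I1 [c1 [m1 [b1 e1]]]] [I2 [c2 [m2 [b2 e2]]]].
exists (I1 + I2)%type, (fun i => match i with inl i => c1 i | inr i => c2 i end),
  (fun i => match i with inl i => m1 i | inr i => m2 i end).
by split=> [[i|i]|x x_cube] //; rewrite big_sumType e1 // e2.
Qed.

Lemma spectrum_opp d B (h : pt d -> CC) :
  spectrum_le B h -> spectrum_le B (fun x => - h x).
Proof.
move=> [I [c [m [bm em]]]]; exists I, (fun i => - c i), m; split=> // x x_cube.
by rewrite em // -sumrN; apply: eq_bigr => i _; rewrite mulNr.
Qed.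

Lemma spectrum_sum d B N (h : 'I_N -> pt d -> CC) :
  (forall j, spectrum_le B (h j)) -> spectrum_le B (fun x => \sum_j h j x).
Proof.
elim: N h => [|N IH] h hh.
  by apply: (spectrum_ext _ (spectrum_const d B 0)) => x _; rewrite big_ord0.
apply: (spectrum_ext _ (spectrum_add (IH _ (fun j => hh (widen_ord (leqnSn N) j)))
  (hh ord_max))) => x _.
by rewrite big_ord_recr.
Qed.

(* The squared modulus of a trigonometric polynomial of degree s has degree 2s:
   |sum_k p_k e_k|^2 = sum_(k,k') p_k conj(p_k') e_(k-k'). *)
Lemma spectrum_sqr_norm d s (q : pt d -> CC) :
  is_trigpoly s q -> spectrum_le s.*2 (fun x => `|q x| ^+ 2).
Proof.
case=> p hp; exists (freq d s * freq d s)%type, (fun kk => p kk.1 * (p kk.2)^*%C),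
  (fun kk i => omega_of kk.1 i - omega_of kk.2 i); split=> [kk i|x _].
  have := omega_bound kk.1 i; have := omega_bound kk.2 i.
  by move: (omega_of _ _) (omega_of _ _) => u v; lia.
rewrite sqr_normc hp /trig_sum rmorph_sum mulr_suml.
under eq_bigr do rewrite mulr_sumr.
rewrite pair_bigA; apply: eq_bigr => kk _ /=.
rewrite -(@ephase_sub d (omega_of kk.1) (omega_of kk.2)
  (fun i => omega_of kk.1 i - omega_of kk.2 i)) //.
by rewrite rmorphM mulrACA.
Qed.

Lemma spectrum_sos d s (g : pt d -> RR) :
  is_sos s g -> spectrum_le s.*2 (fun x => (g x)%:C%C).
Proof.
case=> N [q [hq hg]]; apply: (spectrum_ext hg).
by apply: spectrum_sum => j; apply: spectrum_sqr_norm.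
Qed.

(* If a trigonometric polynomial with coefficients a agrees on the cube with a
   function of spectrum in the box of radius B, its coefficients outside that
   box vanish (uniqueness of coefficients applied to the difference). *)
Lemma trig_sum_high_coef_eq0 d n B (a : freq d n -> CC) (h : pt d -> CC) :
  spectrum_le B h -> (forall x, cube x -> h x = trig_sum a x) ->
  forall k i, (B < absz (omega_of k i))%N -> a k = 0.
Proof.
move=> [I [c [m [bm em]]]] ha k i k_high.
pose cf (j : (freq d n + I)%type) := match j with inl k' => a k' | inr j => - c j end.
pose fr (j : (freq d n + I)%type) := match j with inl k' => omega_of k' | inr j => m j end.
have fr_bound j t : (absz (fr j t) <= n + B)%N.
  by case: j => [k'|j] /=; [have := omega_bound k' t | have := bm j t]; lia.
have diff0 x : cube x -> \sum_j cf j * ephase (fr j) x = 0.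
  move=> x_cube; rewrite big_sumType /= -[\sum_k' a k' * _]/(trig_sum a x) -ha //.
  by rewrite em // -big_split big1 // => j _; rewrite mulNr; exact: subrr.
move: (ephase_sum_coef_eq0 fr_bound diff0 (inl k)); rewrite big_sumType /=.
rewrite (big_pred1 k) => [|k']; last first.
  by apply/forallP/eqP => [same|->//]; apply: omega_inj => t; apply/eqP.
rewrite big_pred0 ?addr0 // => j; apply/negbTE/forallP => /(_ i) /eqP same.
by move: k_high; rewrite -same; have := bm j i; lia.
Qed.

Lemma normc_real (z : CC) : `|z| = (Normc.normc z)%:C%C.
Proof. by case: z => u v; rewrite normc_def. Qed.

Lemma normc_ge0 (z : CC) : 0 <= Normc.normc z.
Proof. by case: z => u v; exact: sqrtr_ge0. Qed.

Lemma sum_normc (I : finType) (a : I -> CC) :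
  (\sum_i Normc.normc (a i))%:C%C = \sum_i `|a i|.
Proof. by rewrite rmorph_sum; apply: eq_bigr => i _; rewrite normc_real. Qed.

(* For a coefficient a, the pair (u, w) = (sqrt(|a|/2), conj(a) / (2 u)) turns
   |a| + Re(a e) into the squared modulus |u e1 + w e2|^2 when e = e1 conj(e2). *)
Definition half_root (a : CC) : RR := Num.sqrt (Normc.normc a / 2).
Definition sq_coef_left (a : CC) : CC := (half_root a)%:C%C.
Definition sq_coef_right (a : CC) : CC := a^*%C * ((2 * half_root a)^-1)%:C%C.

Lemma sqr_norm_binomial (a e1 e2 : CC) : e1 * e1^*%C = 1 -> e2 * e2^*%C = 1 ->
  `|sq_coef_left a * e1 + sq_coef_right a * e2| ^+ 2
    = `|a| + (a * (e1 * e2^*%C) + (a * (e1 * e2^*%C))^*%C) / 2.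
Proof.
move=> e1_unit e2_unit.
have [->|a_neq0] := eqVneq a 0.
  have r0 : half_root 0 = 0 by rewrite /half_root Normc.normc0 mul0r sqrtr0.
  rewrite /sq_coef_left /sq_coef_right r0 conjc0 !mul0r add0r normr0.
  by rewrite expr0n /= rmorph0 !add0r oppr0 mul0r.
set r := Normc.normc a; set p := half_root a.
have r_gt0 : 0 < r by rewrite lt_def normc_ge0 andbT; apply: contra a_neq0 => /eqP/Normc.eq0_normc ->.
have p_gt0 : 0 < p by rewrite /p /half_root sqrtr_gt0 divr_gt0.
have p_neq0 : p != 0 by rewrite gt_eqF.
have r_sqr : r = 2 * p ^+ 2.
  by rewrite /p /half_root sqr_sqrtr ?divr_ge0 ?normc_ge0 // -/r mulrC divfK // pnatr_eq0.
have a_sqr : a * a^*%C = (r ^+ 2)%:C%C by rewrite -sqr_normc normc_real rmorphXn.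
rewrite /sq_coef_left /sq_coef_right -/p sqr_normc rmorphD !rmorphM /= conjcK !oppr0.
rewrite normc_real -/r.
set c := (2 * p)^-1.
have -> : ((p%:C)%C * e1 + a^*%C * (c%:C)%C * e2) * ((p%:C)%C * e1^*%C + a * (c%:C)%C * e2^*%C)
  = ((p * p)%:C)%C * (e1 * e1^*%C) + (a * a^*%C) * ((c * c)%:C)%C * (e2 * e2^*%C)
    + ((p * c)%:C)%C * (a * (e1 * e2^*%C) + a^*%C * (e1^*%C * e2^*^*%C)).
  by rewrite !rmorphM /= conjcK; ring.
rewrite e1_unit e2_unit a_sqr !mulr1 -rmorphM -rmorphD.
have -> : p * p + r ^+ 2 * (c * c) = r by rewrite /c r_sqr; field.
have -> : p * c = 2^-1 by rewrite /c; field.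
by rewrite fmorphV rmorph_nat mulrC.
Qed.

(* A frequency omega of the box of radius 2s is a difference of two frequencies
   of the box of radius s: omega = (omega^+ - s) - (omega^- - s). *)
Definition freq_plus d n s (k : freq d n) : freq d s :=
  [ffun i => inord (if 0 <= omega_of k i then absz (omega_of k i) else 0%N)].
Definition freq_minus d n s (k : freq d n) : freq d s :=
  [ffun i => inord (if 0 <= omega_of k i then 0%N else absz (omega_of k i))].

Lemma omega_split d n s (k : freq d n) :
  (forall i, absz (omega_of k i) <= s.*2)%N ->
  forall i, omega_of k i = omega_of (freq_plus s k) i - omega_of (freq_minus s k) i.
Proof.
move=> k_low i; have := k_low i.
by rewrite /omega_of /freq_plus /freq_minus !ffunE /omega_of; case: ifP => k0 ki; rewrite !inordK; lia.
Qed.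

Lemma sos_family d s (T : finType) (q : T -> pt d -> CC) (h : pt d -> RR) :
  (forall k, is_trigpoly s (q k)) ->
  (forall x, cube x -> (h x)%:C%C = \sum_k `|q k x| ^+ 2) -> is_sos s h.
Proof.
move=> hq hh; exists #|T|, (fun j => q (enum_val j)); split=> [j|x x_cube].
  exact: hq.
rewrite hh // -(@big_enum_val _ _ (@GRing.add CC) T (mem T) (fun k => `|q k x| ^+ 2)).
by apply: eq_bigl => k; rewrite inE.
Qed.

Lemma sos_add d s (g1 g2 h : pt d -> RR) : is_sos s g1 -> is_sos s g2 ->
  (forall x, cube x -> h x = g1 x + g2 x) -> is_sos s h.
Proof.
move=> [N1 [q1 [hq1 hg1]]] [N2 [q2 [hq2 hg2]]] hh.
apply: (@sos_family _ _ _ (fun j : ('I_N1 + 'I_N2)%type =>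
  match j with inl j => q1 j | inr j => q2 j end)) => [[j|j]|x x_cube] //.
by rewrite big_sumType -hg1 // -hg2 // hh // rmorphD.
Qed.

Lemma sos_ge0 d s (h : pt d -> RR) x : is_sos s h -> cube x -> 0 <= h x.
Proof.
move=> [N [q [_ hq]]] x_cube; rewrite -lecR hq //.
by apply: sumr_ge0 => j _; exact: exprn_ge0.
Qed.

Lemma trigpoly_binomial d s (u w : CC) (k1 k2 : freq d s) :
  is_trigpoly s (fun x => u * ephase (omega_of k1) x + w * ephase (omega_of k2) x).
Proof.
exists (fun k => u * (k == k1)%:R + w * (k == k2)%:R) => x.
rewrite /trig_sum (eq_bigr (fun k => u * ((k == k1)%:R * ephase (omega_of k) x)
  + w * ((k == k2)%:R * ephase (omega_of k) x))) => [|k _]; last by rewrite mulrDl !mulrA.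
have pick k0 : \sum_k (k == k0)%:R * ephase (omega_of k) x = ephase (omega_of k0) x.
  rewrite (bigD1 k0) //= eqxx mul1r big1 ?addr0 // => k /negbTE ->.
  by rewrite mul0r.
by rewrite big_split /= -!mulr_sumr !pick.
Qed.

(* The heart of the argument: a real trigonometric polynomial h of degree 2s,
   shifted by the l1 norm of its coefficients, is a sum of squares of degree s:
   each term |a| + Re(a e^{2 i pi omega^T x}) is the square |u e_+ + w e_-|^2. *)
Lemma shifted_trig_sos d n s (a : freq d n -> CC) (h : pt d -> RR) :
  (forall k i, (s.*2 < absz (omega_of k i))%N -> a k = 0) ->
  (forall x, cube x -> (h x)%:C%C = trig_sum a x) ->
  is_sos s (fun x => h x + \sum_k Normc.normc (a k)).
Proof.
move=> a_high ha.
pose q k x := sq_coef_left (a k) * ephase (omega_of (freq_plus s k)) x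
  + sq_coef_right (a k) * ephase (omega_of (freq_minus s k)) x.
apply: (sos_family (q := q)) => [k|x x_cube]; first exact: trigpoly_binomial.
have term k : `|q k x| ^+ 2
    = `|a k| + (a k * ephase (omega_of k) x + (a k * ephase (omega_of k) x)^*%C) / 2.
  rewrite sqr_norm_binomial ?ephase_unit //.
  case: (boolP [forall i, absz (omega_of k i) <= s.*2]%N) => [/forallP k_low|].
    by rewrite (ephase_sub x (omega_split k_low)).
  by case/forallPn => i; rewrite -ltnNge => /a_high ->; rewrite !mul0r.
rewrite (eq_bigr _ (fun k _ => term k)) big_split /= -sum_normc -mulr_suml big_split /=.
rewrite -rmorph_sum -[\sum_k a k * _]/(trig_sum a x) -ha // /= oppr0.
rewrite -[(h x +i* 0)%C]/((h x)%:C%C) rmorphD addrC; congr (_ + _).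
by field.
Qed.

(* c_*(f,s) lies between any level c0 certified by a sum of squares f - c0 and
   the value of f at any point of the cube, since sums of squares are >= 0. *)
Lemma c_star_bounds d s (f : pt d -> RR) (c0 fmin : RR) :
  is_sos s (fun x => f x - c0) -> (exists x, cube x /\ f x = fmin) ->
  c0 <= c_star s f <= fmin.
Proof.
move=> c0_sos [x0 [x0_cube fx0]].
pose S := [set c : RR | is_sos s (fun x => f x - c)]%classic.
have S_ub : ubound S fmin.
  by move=> c c_sos; rewrite -fx0 -subr_ge0; exact: (sos_ge0 c_sos x0_cube).
have S_sup : has_sup S by split; [exists c0 | exists fmin].
apply/andP; split; first exact: sup_upper_bound.
by apply: ge_sup => //; exists c0.
Qed.

Theorem lemma4p1 (d s : nat) (hd : (1 <= d)%N) (hs : (1 <= s)%N)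
  (f : pt d -> RR)
  (hf : is_trigpoly (s.*2) (fun x => (f x)%:C%C))
  (fstar : RR)
  (hmin : forall x, cube x -> fstar <= f x)
  (hatt : exists x, cube x /\ f x = fstar)
  (g : pt d -> RR) (hg : is_sos s g)
  (eps : RR) (heps : Fnorm_le (fun x => f x - fstar - g x) eps) :
  0 <= fstar - c_star s f <= (s.*2.+1 ^ d)%:R * eps.
Proof.
case: heps => n [a [ha a_small]].
pose sigma := \sum_k Normc.normc (a k).
have sigma_ge0 : 0 <= sigma by apply: sumr_ge0 => k _; exact: normc_ge0.
have sigma_le : sigma <= eps by rewrite -lecR sum_normc.
have h_spec : spectrum_le s.*2 (fun x => ((f x - fstar - g x)%:C)%C).
  apply: (spectrum_ext _ (spectrum_add (spectrum_add (spectrum_trigpoly hf)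
    (spectrum_opp (spectrum_const d s.*2 (fstar%:C)%C))) (spectrum_opp (spectrum_sos hg)))).
  by move=> x _; rewrite !rmorphB.
have lower_sos : is_sos s (fun x => f x - (fstar - sigma)).
  have a_high := trig_sum_high_coef_eq0 h_spec ha.
  apply: (sos_add hg (@shifted_trig_sos _ _ _ _ (fun x => f x - fstar - g x) a_high ha)).
  by move=> x _; rewrite /sigma; ring.
have /andP[lower upper] := c_star_bounds lower_sos hatt.
have box_ge1 : 1 <= (s.*2.+1 ^ d)%:R :> RR by rewrite ler1n expn_gt0.
apply/andP; split; first by rewrite subr_ge0.
nra.
Qed.
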